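(* Let $q$ be an odd prime power, $n$ a positive integer with $n\mid(q-1)$, $\lambda\in\mathbb{F}_q^{*}$ with multiplicative order dividing $\frac{q-1}{n}$, and let $\alpha_1,\dots,\alpha_n\in\mathbb{F}_q^{*}$ be the (pairwise distinct) roots of $x^n-\lambda$, i.e. $x^n-\lambda=\prod_{i=1}^n(x-\alpha_i)$, in some fixed order. Let $\ell\ge0$, $\boldsymbol\eta=(\eta_0,\dots,\eta_\ell)\in\mathbb{F}_q^{\ell+1}\setminus\{\boldsymbol0\}$, let $r$ be an integer with $0\le r\le\ell$, and let $k=\frac{n-\ell-r}{2}$ be an integer with $k\ge2$. Let $\boldsymbol v=(v_1,\dots,v_n)$ with $v_i\in\{-1,1\}$ for $1\le i\le n-k+1$ and $v_i\in\mathbb{F}_q\setminus\{-1,0,1\}$ for $n-k+2\le i\le n$. Suppose $$1+\sum_{t=r}^{\ell}\eta_t\,\Phi_{\ell+1+r-t}\neq0,\qquad\text{where }\Phi_i=(-1)^{n-1}P\,\Omega_i\ (1\le i\le\ell+1).$$ Then the $( * )$-$(\mathcal{L},\mathcal{P})$-TGRS code $\mathcal{C}$ is an LCD code, i.e. $\mathcal{C}\cap\mathcal{C}^{\perp}=\{\boldsymbol0\}$.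
   Context: $P=\prod_{i=1}^n\alpha_i$. For an integer $t$, $S_t(x_1,\dots,x_n)$ is the complete homogeneous symmetric polynomial of degree $t$ ($S_t=0$ for $t<0$, $S_0=1$, and $S_t=\sum_{t_1+\dots+t_n=t,\,t_i\ge0}x_1^{t_1}\cdots x_n^{t_n}$ for $t\ge0$), and $\Omega_i=\sum_{t=0}^{\ell}\eta_tS_{t+1-i}(\alpha_1,\dots,\alpha_n)$. The $( * )$-$(\mathcal{L},\mathcal{P})$-TGRS code is $\mathcal{C}=\{(v_1f(\alpha_1),\dots,v_nf(\alpha_n)) : f\in\mathcal{F}_{n,k,\boldsymbol\eta}\}$, where $\mathcal{F}_{n,k,\boldsymbol\eta}=\{\sum_{i=0}^{k-1}f_ix^i+f_0\sum_{j=0}^{\ell}\eta_jx^{k+j} : f_i\in\mathbb{F}_q\}$. $\mathcal{C}^{\perp}$ is the dual with respect to the standard inner product $\sum_i x_iy_i$. *)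

From HB Require Import structures.
From mathcomp Require Import all_boot all_order all_algebra.
Set Implicit Arguments. Unset Strict Implicit. Unset Printing Implicit Defensive.
Import GRing.Theory.
Local Open Scope ring_scope.

(* Complete homogeneous symmetric polynomial of degree t, evaluated at
   a : 'I_n -> F :  sum over (t_1..t_n), t_i >= 0, sum t_i = t, of prod a_i^t_i.
   (Exponents t_i <= t are encoded in 'I_t.+1.) *)
Definition hcomplete (F : fieldType) (n t : nat) (a : 'I_n -> F) : F :=
  \sum_(m : {ffun 'I_n -> 'I_t.+1} | (\sum_i (m i : nat) == t)%N)
     \prod_i a i ^+ m i.

Definition Sym (F : fieldType) (n : nat) (a : 'I_n -> F) (t : int) : F :=
  match t with
  | Posz m => hcomplete m a
  | Negz _ => 0
  end.

Definition Pprod (F : fieldType) (n : nat) (a : 'I_n -> F) : F := \prod_i a i.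

Definition Omega (F : fieldType) (n l : nat) (a : 'I_n -> F)
  (eta : 'I_l.+1 -> F) (i : nat) : F :=
  \sum_(t < l.+1) eta t * Sym a ((t.+1)%:Z - i%:Z).

Definition Phi (F : fieldType) (n l : nat) (a : 'I_n -> F)
  (eta : 'I_l.+1 -> F) (i : nat) : F :=
  (-1) ^+ n.-1 * Pprod a * Omega a eta i.

Definition etapoly (F : fieldType) (k l : nat) (eta : 'I_l.+1 -> F) : {poly F} :=
  \sum_(j < l.+1) eta j *: 'X^(k + j).

Definition in_TGRS_polys (F : fieldType) (k l : nat) (eta : 'I_l.+1 -> F)
  (g : {poly F}) : Prop :=
  exists p : {poly F}, (size p <= k)%N /\ g = p + p`_0 *: etapoly k eta.

Definition in_TGRS_code (F : fieldType) (n k l : nat) (a v : 'I_n -> F)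
  (eta : 'I_l.+1 -> F) (c : 'rV[F]_n) : Prop :=
  exists g : {poly F}, in_TGRS_polys k eta g /\ c = \row_i (v i * g.[a i]).

Definition dotp (F : fieldType) (n : nat) (x y : 'rV[F]_n) : F :=
  \sum_i x ord0 i * y ord0 i.

Definition in_dual (F : fieldType) (n : nat) (C : 'rV[F]_n -> Prop)
  (x : 'rV[F]_n) : Prop :=
  forall y, C y -> dotp x y = 0.

Definition is_LCD (F : fieldType) (n : nat) (C : 'rV[F]_n -> Prop) : Prop :=
  forall x, C x -> in_dual C x -> x = 0.

From HB Require Import structures.
From mathcomp Require Import all_boot all_order all_algebra.
From mathcomp Require Import fingroup cyclic.
From mathcomp Require Import zify ring.
Import GRing.Theory.
Local Open Scope ring_scope.
Set Implicit Arguments. Unset Strict Implicit. Unset Printing Implicit Defensive.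

(* The roots a_i of x^n - lam behave like a coset of the n-th roots of unity:
   for 0 < s < n both the power sums and the complete homogeneous sums S_s(a)
   vanish.  Hence Omega_i = eta_(i-1), Phi_i = lam eta_(i-1), and
   sum_i h(a_i) = n (h_0 + lam h_n) whenever deg h < 2n.
   If c = (v_i f(a_i)) lies in C and in its dual, then
   sum_i v_i^2 (f g)(a_i) = 0 for every g of the code, and v_i^2 = 1 off the
   last k - 1 positions J.  Testing against g = x prod_(i in J, i <> j) (x - a_i)
   forces f(a_j) = 0 for j in J; testing against g = 1 + sum_j eta_j x^(k+j) then
   gives n f_0 (1 + lam sum_(t >= r) eta_t eta_(l+r-t)) = 0, so f_0 = 0; finally
   f has degree < k and the k distinct roots 0 and a_j (j in J), so f = 0. *)

(* Lagrange's theorem in the additive group of F. *)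
Lemma natr_card (F : finFieldType) : #|F|%:R = 0 :> F.
Proof. by have := @expg_cardG F [set: F]%G 1%R (in_setT _); rewrite cardsT. Qed.

Lemma natr_dvdn_card_pred_neq0 (F : finFieldType) n :
  (n %| #|F|.-1)%N -> n%:R != 0 :> F.
Proof.
move=> /dvdnP[m qE]; apply/eqP => n0; have := natr_card F.
have q_gt0 : (0 < #|F|)%N by apply/card_gt0P; exists 0.
rewrite -(prednK q_gt0) qE -addn1 natrD natrM n0 mulr0 add0r => /eqP.
by rewrite oner_eq0.
Qed.

Lemma card_ord_geq n m : #|[set i : 'I_n | (m <= i)%N]| = (n - m)%N.
Proof.
rewrite -sum1_card (eq_bigl (fun i : 'I_n => xpredT i && (m <= i)%N)) => [|i].
  by rewrite -(@big_geq_mkord _ _ _ m n xpredT (fun _ => 1%N)) sum_nat_const_nat muln1.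
by rewrite inE.
Qed.

Lemma sum_delta_nat (R : nzSemiRingType) N c (G : nat -> R) :
  (c < N)%N -> \sum_(m < N) G m * (m == c :> nat)%:R = G c.
Proof.
move=> c_lt_N; rewrite (bigD1 (Ordinal c_lt_N)) //= eqxx mulr1 big1 ?addr0 // => m.
by rewrite -val_eqE /= => /negbTE->; rewrite mulr0.
Qed.

Lemma deriv_prod (R : comNzRingType) (I : eqType) (s : seq I) (G : I -> {poly R}) :
  uniq s ->
  (\prod_(i <- s) G i)^`() = \sum_(i <- s) (G i)^`() * \prod_(j <- s | j != i) G j.
Proof.
elim: s => [|x s IH] /=; first by rewrite !big_nil derivC.
case/andP=> x_notin_s uniq_s; rewrite !big_cons derivM IH // eqxx /=.
congr (_ * _ + _).
  rewrite big_seq_cond [RHS]big_seq_cond; apply: eq_bigl => j.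
  case: (boolP (j \in s)) => //= j_in_s; apply/esym/negP => /eqP jx.
  by rewrite -jx j_in_s in x_notin_s.
rewrite mulr_sumr; apply: eq_big_seq => i i_in_s.
rewrite big_cons (_ : x != i); last by apply: contraNneq x_notin_s => ->.
by rewrite mulrCA.
Qed.

Lemma dotp_evals (F : fieldType) n (a v : 'I_n -> F) (f g : {poly F}) :
  dotp (\row_i (v i * f.[a i])) (\row_i (v i * g.[a i])) =
  \sum_i v i ^+ 2 * (f * g).[a i].
Proof. by apply: eq_bigr => i _; rewrite !mxE hornerM; ring. Qed.

Section CompleteHomogeneous.
Variables (F : fieldType) (n t : nat) (a : 'I_n -> F).

Definition hcomplete_genpoly : {poly F} :=
  \prod_(i < n) \sum_(j < t.+1) 'X^(t - j) * (a i)%:P ^+ j.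

Lemma sum_ffun_complement (f : {ffun 'I_n -> 'I_t.+1}) :
  (\sum_(i < n) (t - f i) + \sum_(i < n) f i = n * t)%N.
Proof.
rewrite -big_split /= (eq_bigr (fun _ => t)) => [|i _]; last by rewrite subnK // -ltnS.
by rewrite sum_nat_const card_ord.
Qed.

Lemma coef_hcomplete_genpoly m :
  hcomplete_genpoly`_m =
  \sum_(f : {ffun 'I_n -> 'I_t.+1})
     (\prod_(i < n) a i ^+ f i) * (m + \sum_(i < n) f i == n * t)%N%:R.
Proof.
rewrite /hcomplete_genpoly bigA_distr_bigA coef_sum; apply: eq_bigr => f _.
rewrite big_split /= prodrXr.
rewrite (eq_bigr (fun i => (a i ^+ f i)%:P)); last by move=> i _; rewrite rmorphXn.
by rewrite -rmorph_prod mulrC coefCM coefXn -(sum_ffun_complement f) eqn_add2r.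
Qed.

Lemma coef_hcomplete_genpoly_gt m : (n * t < m)%N -> hcomplete_genpoly`_m = 0.
Proof.
move=> m_gt; rewrite coef_hcomplete_genpoly big1 // => f _.
by rewrite gtn_eqF ?mulr0 // ltn_addr.
Qed.

Lemma coef_hcomplete_genpoly_hcomplete :
  (0 < n)%N -> hcomplete_genpoly`_(n * t - t) = hcomplete t a.
Proof.
move=> n_gt0; have t_le_nt : (t <= n * t)%N by rewrite leq_pmull.
rewrite coef_hcomplete_genpoly /hcomplete [RHS]big_mkcond /=; apply: eq_bigr => f _.
rewrite -{2}(subnK t_le_nt) eqn_add2l.
by case: ifP; rewrite ?mulr1 ?mulr0.
Qed.

Lemma hcomplete_genpoly_mul_prod :
  hcomplete_genpoly * \prod_(i < n) ('X - (a i)%:P) =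
  (\prod_(i < n) ('X - (a i ^+ t.+1)%:P)) \Po 'X^(t.+1).
Proof.
rewrite /hcomplete_genpoly -big_split rmorph_prod /=; apply: eq_bigr => i _.
by rewrite mulrC -subrXX comp_polyB comp_polyX comp_polyC rmorphXn.
Qed.

End CompleteHomogeneous.

Section BinomialRoots.
Variables (F : fieldType) (n : nat) (lam : F) (a : 'I_n -> F).
Hypothesis Xn_subC_prod : 'X^n - lam%:P = \prod_(i < n) ('X - (a i)%:P).

Lemma root_exp i : a i ^+ n = lam.
Proof.
have := congr1 (horner^~ (a i)) Xn_subC_prod.
rewrite /= horner_prod (bigD1 i) //= !hornerE subrr mul0r.
by move/eqP; rewrite subr_eq0 => /eqP.
Qed.

Lemma prod_roots : (0 < n)%N -> (-1) ^+ n.-1 * \prod_i a i = lam.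
Proof.
move=> n_gt0; have := congr1 (horner^~ 0) Xn_subC_prod.
rewrite /= horner_prod !hornerE expr0n gtn_eqF //=.
under eq_bigr => i _ do rewrite !hornerE.
rewrite prodrN card_ord sub0r => prodE.
have signE : (-1) ^+ n = - (-1) ^+ n.-1 :> F by rewrite -{1}(prednK n_gt0) exprS mulN1r.
by rewrite -[lam]opprK prodE signE mulNr opprK.
Qed.

Lemma root_neq0 i : lam != 0 -> a i != 0.
Proof.
apply: contraNneq => ai0; rewrite -(root_exp i) ai0 expr0n gtn_eqF //.
exact: leq_ltn_trans (leq0n i) (ltn_ord i).
Qed.

Lemma sum_cofactors :
  \sum_(i < n) \prod_(j < n | j != i) ('X - (a j)%:P) = 'X^(n.-1) *+ n.
Proof.
have -> : 'X^(n.-1) *+ n = ('X^n - lam%:P)^`() by rewrite derivB derivC subr0 derivXn.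
rewrite Xn_subC_prod deriv_prod ?index_enum_uniq //.
by apply: eq_bigr => i _; rewrite derivXsubC mul1r.
Qed.

Lemma cofactorE i :
  \prod_(j < n | j != i) ('X - (a j)%:P) = \sum_(s < n) 'X^(n.-1 - s) * (a i)%:P ^+ s.
Proof.
apply: (@mulfI _ ('X - (a i)%:P)); first by rewrite polyXsubC_eq0.
transitivity ('X^n - lam%:P); first by rewrite Xn_subC_prod [RHS](bigD1 i).
by rewrite -(root_exp i) rmorphXn /= subrXX.
Qed.

Lemma power_sum_lt s : (s < n)%N -> \sum_(i < n) a i ^+ s = (s == 0)%:R * n%:R.
Proof.
move=> s_lt_n; have := congr1 (coefp (n.-1 - s)) sum_cofactors.
rewrite /= coef_sum coefMn coefXn (_ : (n.-1 - s == n.-1)%N = (s == 0)); last first.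
  by apply/eqP/eqP; lia.
rewrite mulr_natr => <-; apply: eq_bigr => i _; rewrite cofactorE coef_sum.
rewrite (eq_bigr (fun j : 'I_n => a i ^+ j * (j == s :> nat)%:R)) ?sum_delta_nat //.
move=> j _; rewrite -rmorphXn mulrC coefCM coefXn.
by congr (_ * (nat_of_bool _)%:R); apply/eqP/eqP; have := ltn_ord j; lia.
Qed.

Lemma power_sum m : (m < n + n)%N ->
  \sum_(i < n) a i ^+ m = n%:R * ((m == 0)%:R + lam * (m == n)%:R).
Proof.
move=> m_lt; have [m_lt_n|m_ge_n] := ltnP m n.
  by rewrite power_sum_lt // (ltn_eqF m_lt_n) mulr0 addr0 mulrC.
have expE i : a i ^+ m = a i ^+ (m - n) * lam by rewrite -(root_exp i) -exprD subnK.
under eq_bigr => i _ do rewrite expE.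
rewrite -mulr_suml power_sum_lt; last by lia.
rewrite (_ : (m - n == 0)%N = (m == n)); last by apply/eqP/eqP; lia.
by rewrite (_ : (m == 0)%N = false) ?add0r; [ring | apply/negbTE/eqP; lia].
Qed.

Lemma sum_horner (h : {poly F}) : (0 < n)%N -> (size h <= n + n)%N ->
  \sum_(i < n) h.[a i] = n%:R * (h`_0 + lam * h`_n).
Proof.
move=> n_gt0 size_h; under eq_bigr => i _ do rewrite (horner_coef_wide _ size_h).
rewrite exchange_big /=.
under eq_bigr => m _ do rewrite -mulr_sumr (power_sum (ltn_ord m)).
rewrite (eq_bigr (fun m : 'I_(n + n) => n%:R * (h`_m * (m == 0 :> nat)%:R) +
  n%:R * lam * (h`_m * (m == n :> nat)%:R))) => [|m _]; last by ring.
by rewrite big_split /= -!mulr_sumr !sum_delta_nat; [ring | lia..].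
Qed.

Lemma roots_inj : n%:R != 0 :> F -> lam != 0 -> injective a.
Proof.
move=> n_neq0 lam_neq0 x y axy; apply/eqP; apply: contraT => x_neq_y.
have := congr1 (horner^~ (a x)) sum_cofactors.
rewrite /= horner_sum hornerMn hornerXn big1 => [|i _].
  move/esym/eqP; rewrite -mulr_natl mulf_eq0 (negbTE n_neq0) expf_eq0.
  by rewrite (negbTE (root_neq0 x lam_neq0)) andbF.
rewrite horner_prod; have [->|i_neq_x] := eqVneq i x.
  by rewrite (bigD1 y) 1?eq_sym //= !hornerE axy subrr mul0r.
by rewrite (bigD1 x) 1?eq_sym //= !hornerE subrr mul0r.
Qed.

(* The product hcomplete_genpoly * (x^n - lam) is a polynomial in x^(t+1), so
   its coefficient of x^(n(t+1) - t), which is S_t(a), vanishes for 0 < t < n. *)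
Lemma hcomplete_roots t : (t < n)%N -> hcomplete t a = (t == 0)%:R.
Proof.
move=> t_lt_n; have n_gt0 : (0 < n)%N := leq_ltn_trans (leq0n t) t_lt_n.
rewrite -(@coef_hcomplete_genpoly_hcomplete _ _ t a n_gt0).
case: t t_lt_n => [|t] t_lt_n.
  rewrite /hcomplete_genpoly big1 ?coefC ?muln0 // => i _.
  by rewrite big_ord1 /= subn0 !expr0 mulr1.
have := congr1 (coefp (n * t.+2 - t.+1)) (hcomplete_genpoly_mul_prod t.+1 a).
have N_add : (n * t.+2 - t.+1 + t.+1 = n * t.+2)%N by rewrite subnK //; nia.
have N_ndvd : (t.+2 %| n * t.+2 - t.+1)%N = false.
  apply: contraTF (dvdn_mull n (dvdnn t.+2)) => /dvdn_addr dvdE.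
  by rewrite -N_add dvdE gtnNdvd.
rewrite /= -Xn_subC_prod coef_comp_poly_Xn // N_ndvd mulrBr coefB coefMXn coefMC.
rewrite (_ : (_ < n)%N = false); last by apply/negbTE; rewrite -leqNgt; nia.
rewrite (_ : (_ - n = n * t.+1 - t.+1)%N); last by nia.
by rewrite [X in _ - X * lam]coef_hcomplete_genpoly_gt ?mul0r ?subr0 //; nia.
Qed.

Lemma Sym_roots (m : int) : (m < n%:Z)%R -> Sym a m = (m == 0)%:R.
Proof. by case: m => m //=; rewrite ltz_nat => /hcomplete_roots. Qed.

Lemma Omega_roots l (eta : 'I_l.+1 -> F) s :
  (l < n)%N -> (0 < s <= l.+1)%N -> Omega a eta s = eta (inord s.-1).
Proof.
move=> l_lt_n /andP[s_gt0 s_le]; rewrite /Omega.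
rewrite (eq_bigr (fun t : 'I_l.+1 => eta (inord t) * (t == s.-1 :> nat)%:R)) => [|t _].
  by rewrite (sum_delta_nat (fun m => eta (inord m))) //; lia.
rewrite inord_val Sym_roots; last by have := ltn_ord t; lia.
by congr (_ * (nat_of_bool _)%:R); apply/eqP/eqP; lia.
Qed.

Lemma Phi_roots l (eta : 'I_l.+1 -> F) s : (l < n)%N -> (0 < s <= l.+1)%N ->
  Phi a eta s = lam * eta (inord s.-1).
Proof.
move=> l_lt_n s_range.
by rewrite /Phi /Pprod prod_roots ?Omega_roots //; lia.
Qed.

Lemma sum_horner_small (h : {poly F}) : (0 < n)%N -> (size h <= n)%N ->
  \sum_(i < n) h.[a i] = n%:R * h`_0.
Proof.
move=> n_gt0 size_h.
by rewrite sum_horner ?(nth_default 0 size_h) ?mulr0 ?addr0 // (leq_trans size_h) ?leq_addr.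
Qed.

Section RootSubsets.
Hypotheses (n_neq0 : n%:R != 0 :> F) (lam_neq0 : lam != 0).
Variable J : {set 'I_n}.

Let n_gt0 : (0 < n)%N.
Proof. by rewrite lt0n; apply: contraNneq n_neq0 => ->. Qed.

Lemma vanishing_poly_eq0 (p : {poly F}) :
  p`_0 = 0 -> (size p <= #|J|.+1)%N -> (forall j, j \in J -> p.[a j] = 0) -> p = 0.
Proof.
move=> p0 size_p pJ; apply: (@roots_geq_poly_eq0 _ p (0 :: map a (enum J))).
- rewrite /= rootE horner_coef0 p0 eqxx /=; apply/allP => _ /mapP[j jJ ->].
  by rewrite rootE pJ // -mem_enum.
- rewrite /= map_inj_uniq ?enum_uniq ?andbT; last exact: roots_inj.
  by apply/mapP => -[j _ /esym/eqP]; rewrite (negbTE (root_neq0 j lam_neq0)).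
- by rewrite /= size_map -cardE.
Qed.

Variable w : 'I_n -> F.
Hypotheses (w_out : forall i, i \notin J -> w i = 1) (w_in : forall j, j \in J -> w j != 1).

Lemma sum_weighted_horner (h : {poly F}) :
  \sum_(i < n) w i * h.[a i] = \sum_(i < n) h.[a i] + \sum_(j in J) (w j - 1) * h.[a j].
Proof.
have -> : \sum_(j in J) (w j - 1) * h.[a j] = \sum_(i < n) (w i - 1) * h.[a i].
  rewrite [RHS](bigID (mem J)) /= [X in _ + X]big1 ?addr0 // => i iJ.
  by rewrite w_out ?subrr ?mul0r.
rewrite -big_split; apply: eq_bigr => i _ /=.
by rewrite mulrBl mul1r addrC subrK.
Qed.

Lemma weighted_orth_horner_eq0 (f : {poly F}) :
  (size f + #|J| <= n)%N ->
  (forall g : {poly F}, g`_0 = 0 -> (size g <= #|J|.+1)%N ->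
     \sum_(i < n) w i * (f * g).[a i] = 0) ->
  forall j, j \in J -> f.[a j] = 0.
Proof.
move=> size_f orth j jJ.
pose g : {poly F} := 'X * \prod_(i in J :\ j) ('X - (a i)%:P).
have g0 : g`_0 = 0 by rewrite coefXM.
have size_g : (size g <= #|J|.+1)%N.
  apply: leq_trans (size_mul_leq _ _) _.
  rewrite size_polyX -big_enum size_prod_XsubC -cardE.
  by have := cardsD1 j J; rewrite jJ; lia.
have g_root i : i \in J :\ j -> g.[a i] = 0.
  by move=> iJj; rewrite hornerM horner_prod (bigD1 i) //= hornerXsubC subrr mul0r mulr0.
have g_j : g.[a j] != 0.
  rewrite hornerM hornerX horner_prod mulf_neq0 ?root_neq0 //.
  apply/prodf_neq0 => i; rewrite !inE => /andP[i_neq_j _].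
  rewrite !hornerE subr_eq0; apply: contra i_neq_j => /eqP.
  by move/(roots_inj n_neq0 lam_neq0)->.
clearbody g; have := orth g g0 size_g.
rewrite sum_weighted_horner sum_horner_small ?coef0M ?g0 ?mulr0 ?add0r //; last first.
  by apply: leq_trans (size_mul_leq _ _) _; lia.
rewrite (bigD1 j jJ) /= big1 ?addr0; last first.
  by move=> i /andP[iJ i_neq_j]; rewrite hornerM g_root ?mulr0 // !inE i_neq_j.
move/eqP; rewrite hornerM !mulf_eq0 subr_eq0 (negbTE (w_in jJ)) (negbTE g_j) orbF.
by move/eqP.
Qed.

End RootSubsets.

End BinomialRoots.

Section EtaPoly.
Variables (F : fieldType) (k l : nat) (eta : 'I_l.+1 -> F).

Lemma coef_etapoly m : (etapoly k eta)`_m = \sum_(j < l.+1) eta j * (m == k + j)%:R.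
Proof. by rewrite /etapoly coef_sum; apply: eq_bigr => j _; rewrite coefZ coefXn. Qed.

Lemma coef_etapoly_eq0 m : ((m < k) || (k + l < m))%N -> (etapoly k eta)`_m = 0.
Proof.
move=> m_out; rewrite coef_etapoly big1 // => j _.
by rewrite (_ : (m == k + j) = false) ?mulr0 //; apply/negbTE/eqP; have := ltn_ord j; lia.
Qed.

Lemma size_etapoly : (size (etapoly k eta) <= k + l.+1)%N.
Proof. by apply/leq_sizeP => m m_ge; apply: coef_etapoly_eq0; lia. Qed.

Lemma coef_etapoly_sqr r : (r <= l)%N ->
  (etapoly k eta ^+ 2)`_(l + r + 2 * k) =
  \sum_(t < l.+1 | (r <= t)%N) eta t * eta (inord (l + r - t)).
Proof.
move=> r_le_l; rewrite expr2 {1}/etapoly mulr_suml coef_sum [RHS]big_mkcond.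
apply: eq_bigr => t _ /=; have := ltn_ord t => t_le_l.
rewrite -scalerAl coefZ coefXnM (_ : (_ < k + t)%N = false); last by apply/negbTE; lia.
rewrite coef_etapoly (eq_bigr (fun j : 'I_l.+1 => eta (inord j) * (j == (l + r - t)%N :> nat)%:R)).
  have [t_ge_r|t_lt_r] := leqP r t; first by rewrite (sum_delta_nat (fun m => eta (inord m))) //; lia.
  rewrite big1 ?mulr0 // => j _; rewrite (_ : (j == _ :> nat) = false) ?mulr0 //.
  by apply/negbTE/eqP; have := ltn_ord j; lia.
move=> j _; rewrite inord_val; congr (_ * (nat_of_bool _)%:R).
by apply/eqP/eqP; lia.
Qed.

End EtaPoly.

Section TGRSCode.
Variables (F : fieldType) (n l r k : nat) (lam : F).
Variables (a v : 'I_n -> F) (eta : 'I_l.+1 -> F).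
Hypothesis Xn_subC_prod : 'X^n - lam%:P = \prod_(i < n) ('X - (a i)%:P).
Hypotheses (n_neq0 : n%:R != 0 :> F) (lam_neq0 : lam != 0).
Hypotheses (r_le_l : (r <= l)%N) (nE : n = (l + r + 2 * k)%N) (k_gt0 : (0 < k)%N).
Hypothesis v_out : forall i : 'I_n, (i < n - k + 1)%N -> v i ^+ 2 = 1.
Hypothesis v_in : forall i : 'I_n, (n - k + 1 <= i)%N -> v i ^+ 2 != 1.
Hypothesis eta_cond :
  1 + lam * \sum_(t < l.+1 | (r <= t)%N) eta t * eta (inord (l + r - t)) != 0.

Let E := etapoly k eta.
Let J := [set i : 'I_n | (n - k + 1 <= i)%N].

Let card_J : #|J| = k.-1.
Proof. by rewrite card_ord_geq; lia. Qed.

Let w_out i : i \notin J -> v i ^+ 2 = 1.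
Proof. by rewrite inE -ltnNge; apply: v_out. Qed.

Let w_in j : j \in J -> v j ^+ 2 != 1.
Proof. by rewrite inE; apply: v_in. Qed.

Lemma size_TGRS_poly (p : {poly F}) :
  (size p <= k)%N -> (size (p + p`_0 *: E)%R <= k + l.+1)%N.
Proof.
move=> size_p; apply: leq_trans (size_add _ _) _; rewrite geq_max.
by rewrite (leq_trans size_p) ?leq_addr //= (leq_trans (size_scale_leq _ _)) ?size_etapoly.
Qed.

Lemma TGRS_dual_coef0_eq0 (p : {poly F}) : (size p <= k)%N ->
  (forall j, j \in J -> (p + p`_0 *: E).[a j] = 0) ->
  \sum_(i < n) v i ^+ 2 * ((p + p`_0 *: E) * (1 + E)).[a i] = 0 -> p`_0 = 0.
Proof.
move=> size_p f_J; have size_f := size_TGRS_poly size_p.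
have size_1E : (size (1 + E)%R <= k + l.+1)%N.
  by apply: leq_trans (size_add _ _) _; rewrite geq_max size_etapoly size_poly1; lia.
have E0 : E`_0 = 0 by apply: coef_etapoly_eq0; lia.
rewrite (eq_bigr (fun i => ((p + p`_0 *: E) * (1 + E)).[a i])) => [|i _]; last first.
  have [iJ|/w_out->] := boolP (i \in J); last by rewrite mul1r.
  by rewrite hornerM f_J // !mul0r mulr0.
rewrite (sum_horner Xn_subC_prod); [|lia|by apply: leq_trans (size_mul_leq _ _) _; lia].
have -> : (p + p`_0 *: E) * (1 + E) = p + p * E + p`_0 *: E + p`_0 *: (E * E).
  by rewrite -!mul_polyC; ring.
have E2n : (E ^+ 2)`_n = \sum_(t < l.+1 | (r <= t)%N) eta t * eta (inord (l + r - t)).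
  by rewrite nE coef_etapoly_sqr.
have p_n : p`_n = 0 by apply: nth_default; apply: leq_trans size_p _; lia.
have pE_n : (p * E)`_n = 0.
  apply: nth_default; apply: leq_trans (size_mul_leq _ _) _.
  by rewrite -subn1 leq_subLR (leq_trans (leq_add size_p (size_etapoly k eta))) //; lia.
have E_n : E`_n = 0 by apply: coef_etapoly_eq0; lia.
rewrite !coefD !coefZ !coef0M E0 -expr2 E2n p_n pE_n E_n.
move/eqP; rewrite mulf_eq0 (negbTE n_neq0) /= => /eqP coefE.
have : p`_0 * (1 + lam * \sum_(t < l.+1 | (r <= t)%N) eta t * eta (inord (l + r - t))) = 0.
  by rewrite -[RHS]coefE; ring.
by move/eqP; rewrite mulf_eq0 (negbTE eta_cond) orbF => /eqP.
Qed.

Lemma TGRS_is_LCD : is_LCD (in_TGRS_code k a v eta).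
Proof.
move=> _ [_ [[p [size_p ->]] ->]] dual.
set f := p + p`_0 *: E.
have orth g : in_TGRS_polys k eta g -> \sum_(i < n) v i ^+ 2 * (f * g).[a i] = 0.
  by move=> g_in; rewrite -dotp_evals; apply: dual; exists g.
have f_J : forall j, j \in J -> f.[a j] = 0.
  apply: (weighted_orth_horner_eq0 Xn_subC_prod n_neq0 lam_neq0 w_out w_in).
    by rewrite card_J (leq_trans (leq_add (size_TGRS_poly size_p) (leqnn _))) //; lia.
  move=> g g0 size_g; apply: orth; exists g; rewrite g0 scale0r addr0.
  by split => //; rewrite card_J in size_g; apply: leq_trans size_g _; lia.
have p0 : p`_0 = 0.
  apply: TGRS_dual_coef0_eq0 size_p f_J (orth _ _); exists 1.
  by rewrite size_poly1 coefC eqxx scale1r; split => //; lia.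
have f_eq : f = p by rewrite /f p0 scale0r addr0.
have p_eq0 : p = 0.
  apply: (vanishing_poly_eq0 Xn_subC_prod n_neq0 lam_neq0 p0) => [|j /f_J]; last by rewrite f_eq.
  by rewrite card_J prednK.
by apply/rowP => i; rewrite !mxE f_eq p_eq0 horner0 mulr0.
Qed.

End TGRSCode.

Theorem theorem4p4 (F : finFieldType) (n : nat) (lam : F)
  (alpha : 'I_n -> F) (l r k : nat) (eta : 'I_l.+1 -> F) (v : 'I_n -> F) :
  odd #|F| ->
  (0 < n)%N ->
  (n %| #|F|.-1)%N ->
  lam != 0 ->
  lam ^+ (#|F|.-1 %/ n) = 1 ->
  'X^n - lam%:P = \prod_(i < n) ('X - (alpha i)%:P) ->
  (exists j, eta j != 0) ->
  (r <= l)%N ->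
  n = (l + r + 2 * k)%N ->
  (2 <= k)%N ->
  (forall i : 'I_n, (i < n - k + 1)%N -> v i = 1 \/ v i = -1) ->
  (forall i : 'I_n, (n - k + 1 <= i)%N ->
       [/\ v i != -1, v i != 0 & v i != 1]) ->
  1 + \sum_(t < l.+1 | (r <= t)%N) eta t * Phi alpha eta (l.+1 + r - t)%N != 0 ->
  is_LCD (in_TGRS_code k alpha v eta).
Proof.
move=> _ n_gt0 n_dvd lam_neq0 _ Xn_subC _ r_le_l nE k_ge2 v_sign v_generic Phi_cond.
apply: (TGRS_is_LCD Xn_subC (natr_dvdn_card_pred_neq0 n_dvd) lam_neq0 r_le_l nE).
- by apply: leq_trans k_ge2.
- by move=> i /v_sign[]->; rewrite ?sqrrN expr1n.
- by move=> i /v_generic[vN1 _ v1]; rewrite sqrf_eq1 negb_or v1.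
- rewrite mulr_sumr (eq_bigr (fun t => eta t * Phi alpha eta (l.+1 + r - t)%N)) // => t r_le_t.
  have t_le_l := ltn_ord t.
  rewrite (Phi_roots Xn_subC); [|lia..].
  by rewrite mulrCA (_ : (l.+1 + r - t).-1 = l + r - t)%N //; lia.
Qed.
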